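(* Let $\lambda,\mu$ be partitions with $\mu\subseteq\lambda$ and $\lambda/\mu$ a horizontal strip (i.e. $\lambda_{i+1}\le\mu_i\le\lambda_i$ for all $i\ge1$), and let $N\in\mathfrak{gl}_n(\Bbbk)$ be nilpotent with $\mathrm{JF}(N)=\lambda$. Then there is a bijection $$\{V\subseteq\Bbbk^n: N(\Bbbk^n)\subseteq V,\ \mathrm{JF}(N|_V)=\mu\}\;\cong\;\prod_{1\le i<j}\Bbbk^{(\lambda_i-\mu_i)(\mu_j-\lambda_{j+1})}\times\prod_{i\ge1}\mathrm{Gr}_{\mu_i-\lambda_{i+1},\,\lambda_i-\lambda_{i+1}}.$$
   Context: $\Bbbk$ any field. For a nilpotent endomorphism $N$, $\mathrm{JF}(N)$ is the partition $\lambda$ with $\lambda_1+\cdots+\lambda_i=\dim\ker N^i$ for all $i$ (the conjugate of the Jordan block size partition). If $N(\Bbbk^n)\subseteq V$ then $V$ is $N$-stable so $N|_V$ makes sense. $\mathrm{Gr}_{m,a}$ denotes the set of $m$-dimensional subspaces of $\Bbbk^a$. *)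

From HB Require Import structures.
From mathcomp Require Import all_boot all_order all_algebra.
Set Implicit Arguments. Unset Strict Implicit. Unset Printing Implicit Defensive.
Import GRing.Theory.
Local Open Scope ring_scope.

(* Conventions: k^n is the space of row vectors 'rV[F]_n; the endomorphism   *)
(* N : 'M[F]_n acts by v |-> v *m N.  A subspace of k^n is represented by    *)
(* its canonical row-space matrix, i.e. a V : 'M[F]_n with <<V>>%MS = V.     *)
(* Partitions are functions nat -> nat, 0-indexed: lam i = lambda_(i+1).     *)

Definition is_partition (l : nat -> nat) : Prop :=
  (forall i, (l i.+1 <= l i)%N) /\ exists m, forall i, (m <= i)%N -> l i = 0%N.

Definition is_subspace {F : fieldType} {n : nat} (V : 'M[F]_n) : bool :=
  (<<V>>%MS == V).

(* JF of the restriction N|_V, for an N-stable subspace V:                   *)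
(* mu_1 + ... + mu_i = dim ker (N|_V)^i = dim (V /\ ker N^i) for all i.      *)
Definition JF_restr {F : fieldType} {n : nat} (N V : 'M[F]_n) (mu : nat -> nat)
  : Prop :=
  forall i : nat, (\sum_(k < i) mu k)%N = \rank (V :&: kermx (N ^+ i))%MS.

Definition JF {F : fieldType} {n : nat} (N : 'M[F]_n) (lam : nat -> nat) : Prop :=
  forall i : nat, (\sum_(k < i) lam k)%N = \rank (kermx (N ^+ i)).

Definition Gr (F : fieldType) (m a : nat) : Type :=
  {V : 'M[F]_a | is_subspace V && (\rank V == m)}.

Definition SubspSet (F : fieldType) (n : nat) (N : 'M[F]_n) (mu : nat -> nat) : Type :=
  {V : 'M[F]_n | is_subspace V /\ ((N <= V)%MS /\ JF_restr N V mu)}.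

(* The right-hand side: factors with index >= n are trivial (singletons),   *)
(* since JF(N) = lam forces lam i = 0 (hence mu i = 0) for i >= n.           *)
Definition ProdSet (F : fieldType) (n : nat) (lam mu : nat -> nat) : Type :=
  ((forall p : {p : 'I_n * 'I_n | (p.1 < p.2)%N},
      'rV[F]_((lam (sval p).1 - mu (sval p).1) * (mu (sval p).2 - lam (sval p).2.+1)))
   * (forall i : 'I_n, Gr F (mu i - lam i.+1) (lam i - lam i.+1)))%type.

From HB Require Import structures.
From mathcomp Require Import all_boot all_order all_algebra.
From mathcomp Require Import zify.
From Stdlib Require Import ProofIrrelevance FunctionalExtensionality ClassicalEpsilon.
Set Implicit Arguments. Unset Strict Implicit. Unset Printing Implicit Defensive.
Import GRing.Theory.
Local Open Scope ring_scope.

(* Let G_i := ker N^i + im N, a flag running from im N (i = 0) to the whole space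
   (i >= n), with dim G_i = n - lam i.  For V containing im N, the modular law turns
   JF(N|_V) = mu into prescribed dimensions
   dim (V :&: G_i) = dim im N + sum_(k < i) (mu k - lam (k+1)).
   Cutting V by G_0, G_1, ..., the subspaces at level i+1 lying over a fixed V :&: G_i
   form a Schubert cell {V | V <= G, V :&: G' = V', dim V = dim V' + d} for
   V' <= G' <= G, which is parametrized by Gr_(d, dim G - dim G') times
   k^(d (dim G' - dim V')).  Here d = mu i - lam (i+1), dim G_(i+1) - dim G_i =
   lam i - lam (i+1), and dim G_i - dim (V :&: G_i) = sum_(k < i) (lam k - mu k),
   which splits into the factors k^((lam k - mu k) (mu i - lam (i+1))), k < i. *)

Definition equipotent (A B : Type) : Prop := exists f : A -> B, bijective f.

Lemma equipotent_refl A : equipotent A A.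
Proof. by exists id; exists id. Qed.

Lemma equipotent_sym A B : equipotent A B -> equipotent B A.
Proof. by case=> f [g fg gf]; exists g; exists f. Qed.

Lemma equipotent_trans A B C :
  equipotent A B -> equipotent B C -> equipotent A C.
Proof. by case=> f bf [g bg]; exists (g \o f); apply: bij_comp. Qed.

Lemma equipotent_prod A A' B B' :
  equipotent A A' -> equipotent B B' -> equipotent (A * B) (A' * B').
Proof.
case=> f [f' ff f'f] [g [g' gg g'g]].
exists (fun p => (f p.1, g p.2)); exists (fun p => (f' p.1, g' p.2)).
  by case=> a b /=; rewrite ff gg.
by case=> a b /=; rewrite f'f g'g.
Qed.

Lemma equipotent_prodC A B : equipotent (A * B) (B * A).
Proof. by exists (fun p => (p.2, p.1)); exists (fun p => (p.2, p.1)); case. Qed.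

Lemma equipotent_singleton A B (a : A) (b : B) :
  (forall x, x = a) -> (forall y, y = b) -> equipotent A B.
Proof. by move=> ha hb; exists (fun _ => b); exists (fun _ => a). Qed.

Lemma inj_surj_bijective A B (f : A -> B) :
  injective f -> (forall y, exists x, f x = y) -> bijective f.
Proof.
move=> f_inj f_surj.
have g y : {x | f x = y} := constructive_indefinite_description _ (f_surj y).
exists (fun y => sval (g y)) => [x|y]; last exact: svalP (g y).
by apply: f_inj; case: (g (f x)).
Qed.

Lemma choose_bijections (B : Type) (P C : B -> Type) :
  (forall b, equipotent (P b) (C b)) ->
  exists f : forall b, P b -> C b, exists g : forall b, C b -> P b,
    forall b, cancel (f b) (g b) /\ cancel (g b) (f b).
Proof.
move=> PC.
have fg b : {fg : (P b -> C b) * (C b -> P b) | cancel fg.1 fg.2 /\ cancel fg.2 fg.1}.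
  apply: constructive_indefinite_description.
  by case: (PC b) => f [g ? ?]; exists (f, g).
by exists (fun b => (sval (fg b)).1), (fun b => (sval (fg b)).2) => b; case: (fg b).
Qed.

Lemma equipotent_sigma (B C : Type) (P : B -> Type) :
  (forall b, equipotent (P b) C) -> equipotent {b : B & P b} (B * C).
Proof.
move=> /(@choose_bijections _ _ (fun _ => C)) [f [g fgK]].
exists (fun s => (projT1 s, f (projT1 s) (projT2 s))).
exists (fun p => existT _ p.1 (g p.1 p.2)).
  by case=> b p /=; rewrite (proj1 (fgK b)).
by case=> b c /=; rewrite (proj2 (fgK b)).
Qed.

Lemma equipotent_pi (I : Type) (A B : I -> Type) :
  (forall i, equipotent (A i) (B i)) -> equipotent (forall i, A i) (forall i, B i).
Proof.
move=> /choose_bijections [f [g fgK]].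
exists (fun a i => f i (a i)); exists (fun b i => g i (b i)) => a;
  apply: functional_extensionality_dep => i; first by rewrite (proj1 (fgK i)).
by rewrite (proj2 (fgK i)).
Qed.

Lemma equipotent_pi_prod (I : Type) (A B : I -> Type) :
  equipotent (forall i, A i * B i) ((forall i, A i) * (forall i, B i)).
Proof.
exists (fun f => (fun i => (f i).1, fun i => (f i).2)).
exists (fun p i => (p.1 i, p.2 i)); last by case.
by move=> f; apply: functional_extensionality_dep => i /=; case: (f i).
Qed.

Lemma equipotent_sig_iff T (P Q : T -> Prop) :
  (forall x, P x <-> Q x) -> equipotent {x | P x} {x | Q x}.
Proof.
move=> PQ; exists (fun x => exist _ (sval x) (proj1 (PQ _) (svalP x))).
exists (fun x => exist _ (sval x) (proj2 (PQ _) (svalP x))).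
  by case=> x p; apply: subset_eq_compat.
by case=> x p; apply: subset_eq_compat.
Qed.

Lemma equipotent_fibres T U (P : T -> Prop) (Q : U -> Prop) (g : T -> U) :
  (forall x, P x -> Q (g x)) ->
  equipotent {x | P x} {y : {y | Q y} & {x | P x /\ g x = sval y}}.
Proof.
move=> PQg.
exists (fun x => existT _ (exist _ (g (sval x)) (PQg _ (svalP x)))
                  (exist _ (sval x) (conj (svalP x) erefl))).
exists (fun s => exist _ (sval (projT2 s)) (proj1 (svalP (projT2 s)))).
  by case=> x px; apply: subset_eq_compat.
case=> [[y qy] [x [px e]]] /=; move: qy e => /= qy e; subst y.
rewrite (proof_irrelevance _ (PQg x _) qy).
by congr existT; apply: subset_eq_compat.
Qed.

Lemma equipotent_pi_ord0 (A : 'I_0 -> Type) B (b : B) :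
  (forall y, y = b) -> equipotent (forall i, A i) B.
Proof.
have a : forall i, A i by case.
apply: (equipotent_singleton (a := a)) => f.
by apply: functional_extensionality_dep => -[].
Qed.

Lemma dep_ord_irrelevance m (A : nat -> Type) (f : forall i : 'I_m, A i) i
  (h1 h2 : (i < m)%N) : f (Ordinal h1) = f (Ordinal h2).
Proof. by rewrite (bool_irrelevance h1 h2). Qed.

Lemma eq_ord_max m (i : 'I_m.+1) : (m <= i)%N -> m = i.
Proof. by move=> h; apply/eqP; rewrite eqn_leq h -ltnS ltn_ord. Qed.

Lemma ecast_ord m (A : nat -> Type) (f : forall i : 'I_m, A i) (j : 'I_m) i
  (hi : (i < m)%N) (e : nat_of_ord j = i) : ecast k (A k) e (f j) = f (Ordinal hi).
Proof. by case: i / e hi => hi; case: j hi => j hj hi; apply: dep_ord_irrelevance. Qed.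

Section SplitLastIndex.

Variables (m : nat) (A : nat -> Type).

(* The dependent type forces a transport along m = i in the last case. *)
Definition extend_last (f : forall i : 'I_m, A i) (a : A m) (i : 'I_m.+1) : A i :=
  match ltnP i m with
  | LtnNotGeq h => f (Ordinal h)
  | GeqNotLtn h => ecast k (A k) (eq_ord_max h) a
  end.

Lemma extend_last_widen (f : forall i : 'I_m.+1, A i) (i : 'I_m.+1) :
  extend_last (fun j : 'I_m => f (widen_ord (leqnSn m) j)) (f ord_max) i = f i.
Proof.
rewrite /extend_last; case: ltnP => h; case: i h => i hi h /=.
  exact: (@dep_ord_irrelevance m.+1).
exact: (@ecast_ord m.+1 A f ord_max i hi).
Qed.

Lemma equipotent_pi_last :
  equipotent (forall i : 'I_m.+1, A i) ((forall i : 'I_m, A i) * A m).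
Proof.
exists (fun f => (fun i : 'I_m => f (widen_ord (leqnSn m) i), f ord_max)).
exists (fun p => extend_last p.1 p.2).
  by move=> f; apply: functional_extensionality_dep => i; apply: extend_last_widen.
case=> f a; congr pair; rewrite /extend_last.
  apply: functional_extensionality_dep => i /=; case: ltnP => h.
    by case: i h => i hi h /=; apply: (@dep_ord_irrelevance m A f).
  by have := ltn_ord i; rewrite ltnNge h.
case: ltnP => /= h; first by have := h; rewrite ltnn.
by rewrite (eq_irrelevance (@eq_ord_max m ord_max h) erefl).
Qed.

End SplitLastIndex.

Lemma equipotent_rV_add (F : fieldType) p q :
  equipotent 'rV[F]_(p + q) ('rV[F]_p * 'rV[F]_q).
Proof.
exists (fun x => (lsubmx x, rsubmx x)); exists (fun y => row_mx y.1 y.2).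
  by move=> x /=; rewrite hsubmxK.
by case=> a b /=; rewrite row_mxKl row_mxKr.
Qed.

Lemma equipotent_rV_sum (F : fieldType) (d : nat) (f : nat -> nat) i :
  equipotent 'rV[F]_(d * \sum_(j < i) f j) (forall j : 'I_i, 'rV[F]_(f j * d)).
Proof.
elim: i => [|i IH].
  apply/equipotent_sym/(@equipotent_pi_ord0 _ _ 0).
  by rewrite big_ord0 muln0 => y; apply: thinmx0.
rewrite big_ord_recr /= mulnDr.
apply: equipotent_trans (equipotent_rV_add _ _ _) _.
apply: equipotent_trans _
  (equipotent_sym (equipotent_pi_last i (fun j => 'rV[F]_(f j * d)))).
by apply: equipotent_prod => //; rewrite mulnC; apply: equipotent_refl.
Qed.

Lemma equipotent_pi_pairs n (h : nat -> nat -> nat) (T : nat -> Type) :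
  equipotent (forall i : 'I_n, forall j : 'I_i, T (h j i))
             (forall p : {p : 'I_n * 'I_n | (p.1 < p.2)%N}, T (h (sval p).1 (sval p).2)).
Proof.
exists (fun f p => f (sval p).2 (Ordinal (svalP p))).
exists (fun g (i : 'I_n) (j : 'I_i) =>
          g (exist (fun p : 'I_n * 'I_n => (p.1 < p.2)%N)
                   (widen_ord (ltnW (ltn_ord i)) j, i) (ltn_ord j))).
  move=> f; apply: functional_extensionality_dep => i.
  apply: functional_extensionality_dep => -[j hj] /=.
  exact: (@dep_ord_irrelevance i (fun j => T (h j i)) (f i)).
move=> g; apply: functional_extensionality_dep => -[[[j hj] i] hji] /=.
suff E q1 q2 : g (exist _ (Ordinal q1, i) q2) = g (exist _ (Ordinal hj, i) hji).
  exact: E.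
by rewrite (bool_irrelevance q1 hj) (bool_irrelevance q2 hji).
Qed.

Lemma equipotent_rV_triangle (F : fieldType) n (f g : nat -> nat) :
  equipotent (forall i : 'I_n, 'rV[F]_(g i * \sum_(k < i) f k))
             (forall p : {p : 'I_n * 'I_n | (p.1 < p.2)%N},
                'rV[F]_(f (sval p).1 * g (sval p).2)).
Proof.
apply: equipotent_trans _ (@equipotent_pi_pairs n (fun j i => f j * g i)%N _).
by apply: equipotent_pi => i; apply: equipotent_rV_sum.
Qed.

(** * Schubert cells *)

Section RowSpaces.

Variables (F : fieldType) (n : nat).

Lemma exists_compl (A B : 'M[F]_n) k : (A <= B)%MS -> (\rank B - \rank A)%N = k ->
  exists C : 'M[F]_(k, n), [/\ row_free C, (C :&: A)%MS = 0 & (C + A == B)%MS].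
Proof.
move=> sAB <-; set D := (B :\: A)%MS.
have DA0 : (D :&: A)%MS = 0 by apply: capmx_diff.
have DAB : (D + A :=: B)%MS.
  apply: eqmx_trans (addsmx_diff_cap_eq B A).
  by apply: adds_eqmx => //; apply: eqmx_sym; apply/capmx_idPr.
have rD : \rank D = (\rank B - \rank A)%N.
  by have := mxrank_sum_cap D A; rewrite DA0 mxrank0 addn0 DAB => ->; rewrite addnK.
rewrite -rD; exists (row_base D); split; first exact: row_base_free.
  by apply/eqP; rewrite -submx0 (cap_eqmx (eq_row_base D) (eqmx_refl A)) DA0.
by apply/eqmxP; apply: eqmx_trans (adds_eqmx (eq_row_base D) (eqmx_refl A)) DAB.
Qed.

Lemma inj_row_free d (A : 'M[F]_(d, n)) :
  (forall w : 'rV_d, w *m A = 0 -> w = 0) -> row_free A.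
Proof.
move=> A_inj; rewrite -kermx_eq0; apply/eqP/row_matrixP => i.
by rewrite row0; apply: A_inj; apply/sub_kermxP; apply: row_sub.
Qed.

Lemma sub_cap0_eq0 m p q (Y : 'M[F]_(m, n)) (A : 'M[F]_(p, n)) (B : 'M[F]_(q, n)) :
  (Y <= A)%MS -> (Y <= B)%MS -> (A :&: B)%MS = 0 -> Y = 0.
Proof. by move=> sYA sYB AB0; apply/eqP; rewrite -submx0 -AB0 sub_capmx sYA sYB. Qed.

Lemma capmx_adds_disjoint p1 p2 p3 p4 (B : 'M[F]_(p1, n)) (V' : 'M[F]_(p2, n))
    (C : 'M[F]_(p3, n)) (G' : 'M[F]_(p4, n)) :
  (B <= G')%MS -> (V' <= G')%MS -> (C :&: G')%MS = 0 -> (B :&: V')%MS = 0 ->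
  (B :&: (V' + C))%MS = 0.
Proof.
move=> sBG' sV'G' CG'0 BV'0.
have e : ((V' + C) :&: G' :=: V')%MS.
  by apply: eqmx_trans (eqmx_sym (matrix_modl C sV'G')) _; rewrite CG'0; apply: addsmx0.
apply/eqP; rewrite -submx0 -BV'0 sub_capmx capmxSl /= -e sub_capmx capmxSr.
exact: submx_trans (capmxSl _ _) sBG'.
Qed.

Lemma exists_coord g (C : 'M[F]_(g, n)) (G' : 'M[F]_n) :
  row_free C -> (C :&: G')%MS = 0 ->
  exists P : 'M[F]_(n, g),
    forall p (Y : 'M_(p, g)) (Z : 'M_(p, n)), (Z <= G')%MS -> (Y *m C + Z) *m P = Y.
Proof.
move=> freeC CG'0.
have CG'0' : (<<C>> :&: <<G'>>)%MS = 0 :> 'M_n.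
  by apply/eqP; rewrite -submx0 (cap_eqmx (genmxE C) (genmxE G')) CG'0.
have CK : C *m pinvmx C = 1%:M.
  by apply: (row_free_inj freeC); rewrite mul1mx mulmxKpV.
exists (proj_mx <<C>>%MS <<G'>>%MS *m pinvmx C) => p Y Z sZG'.
rewrite mulmxA mulmxDl (proj_mx_id CG'0') ?genmxE ?submxMl //.
by rewrite (proj_mx_0 CG'0') ?genmxE // addr0 -mulmxA CK mulmx1.
Qed.

End RowSpaces.

(* [pid_mx d *m row_ebase X] is [row_base X] with its number of rows fixed to [d]. *)
Definition rbase (F : fieldType) d g (X : 'M[F]_g) : 'M[F]_(d, g) :=
  pid_mx d *m row_ebase X.

Lemma rbase_free (F : fieldType) d g (X : 'M[F]_g) :
  \rank X = d -> row_free (rbase d X).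
Proof. by move=> <-; apply: row_base_free. Qed.

Lemma eq_rbase (F : fieldType) d g (X : 'M[F]_g) :
  \rank X = d -> (rbase d X :=: X)%MS.
Proof. by move=> <-; apply: eq_row_base. Qed.

Lemma Gr_rank (F : fieldType) d g (X : Gr F d g) : \rank (sval X) = d.
Proof. by case: X => X /= /andP [_ /eqP]. Qed.

Lemma Gr_subspace (F : fieldType) d g (X : Gr F d g) : is_subspace (sval X).
Proof. by case: X => X /= /andP []. Qed.

Definition schubert_cell (F : fieldType) n (V' G' G : 'M[F]_n) (r : nat) (V : 'M[F]_n) :
  Prop :=
  is_subspace V /\ [/\ (V <= G)%MS, (V :&: G' == V')%MS & \rank V = r].

Section SchubertCell.

Variables (F : fieldType) (n c a g d : nat) (V' G' G : 'M[F]_n).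
Variables (C : 'M[F]_(g, n)) (B : 'M[F]_(a - c, n)).
Variables (PC : 'M[F]_(n, g)) (PB : 'M[F]_(n, a - c)).
Hypotheses (sV'G' : (V' <= G')%MS) (rV' : \rank V' = c).
Hypotheses (CG' : (C + G' == G)%MS) (BV' : (B + V' == G')%MS).
Hypothesis PC_coord : forall p (Y : 'M_(p, g)) (Z : 'M_(p, n)),
  (Z <= G')%MS -> (Y *m C + Z) *m PC = Y.
Hypothesis PB_coord : forall p (Y : 'M_(p, a - c)) (Z : 'M_(p, n)),
  (Z <= V' + C)%MS -> (Y *m B + Z) *m PB = Y.

Let sCG : (C <= G)%MS. Proof. by rewrite -(eqmxP CG') addsmxSl. Qed.
Let sG'G : (G' <= G)%MS. Proof. by rewrite -(eqmxP CG') addsmxSr. Qed.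
Let sBG' : (B <= G')%MS. Proof. by rewrite -(eqmxP BV') addsmxSl. Qed.
Let sV'G : (V' <= G)%MS. Proof. exact: submx_trans sV'G' sG'G. Qed.

Let PC_G' p (Z : 'M_(p, n)) : (Z <= G')%MS -> Z *m PC = 0.
Proof. by move=> sZG'; have := PC_coord 0 sZG'; rewrite mul0mx add0r. Qed.

Let PB_V'C p (Z : 'M_(p, n)) : (Z <= V' + C)%MS -> Z *m PB = 0.
Proof. by move=> sZ; have := PB_coord 0 sZ; rewrite mul0mx add0r. Qed.

(* The V in the cell are the V' + cell_gen X M: X in Gr_(d, g) records V modulo G'
   in coordinates along C, and M the d x (a - c) matrix of B-components of its lift. *)
Definition cell_gen (X : 'M[F]_g) (M : 'rV[F]_(d * (a - c))) : 'M[F]_(d, n) :=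
  rbase d X *m C + vec_mx M *m B.

Lemma cell_gen_PC X M : cell_gen X M *m PC = rbase d X.
Proof. by rewrite PC_coord // (submx_trans (submxMl _ _)). Qed.

Lemma cell_gen_PB X M : cell_gen X M *m PB = vec_mx M.
Proof. by rewrite /cell_gen addrC PB_coord // (submx_trans (submxMl _ _)) ?addsmxSr. Qed.

Lemma cell_gen_sub X M : (cell_gen X M <= G)%MS.
Proof.
by rewrite addmx_sub ?(submx_trans (submxMl _ _)) // (submx_trans sBG' sG'G).
Qed.

Lemma cell_gen_modG' X M p (w : 'M_(p, d)) :
  \rank X = d -> (w *m cell_gen X M <= G')%MS -> w = 0.
Proof.
move=> rX sG'; apply: (row_free_inj (rbase_free rX)).
by rewrite mul0mx -(cell_gen_PC X M) mulmxA PC_G'.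
Qed.

Lemma cell_gen_capG' X M p (Y : 'M_(p, n)) :
  \rank X = d -> (Y <= cell_gen X M)%MS -> (Y <= G')%MS -> Y = 0.
Proof. by move=> rX /submxP [D ->] /cell_gen_modG' ->; rewrite ?mul0mx. Qed.

Lemma rank_cell_gen X M : \rank X = d -> \rank (cell_gen X M) = d.
Proof.
move=> rX; apply/eqP/inj_row_free => w w0.
by apply: (@cell_gen_modG' X M _ w rX); rewrite w0 sub0mx.
Qed.

Lemma cell_gen_cell X M :
  \rank X = d -> schubert_cell V' G' G (c + d) <<(V' + cell_gen X M)%MS>>%MS.
Proof.
move=> rX; split; first by rewrite /is_subspace genmx_id.
have W_G'0 : (cell_gen X M :&: G')%MS = 0.
  by apply: (cell_gen_capG' rX); [apply: capmxSl | apply: capmxSr].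
split.
- by rewrite genmxE addsmx_sub sV'G cell_gen_sub.
- apply/eqmxP; apply: eqmx_trans (cap_eqmx (genmxE _) (eqmx_refl G')) _.
  by apply: eqmx_trans (eqmx_sym (matrix_modl _ sV'G')) _; rewrite W_G'0; apply: addsmx0.
- rewrite mxrank_gen mxrank_disjoint_sum ?rV' ?rank_cell_gen //.
  by apply: (cell_gen_capG' rX); [apply: capmxSr | apply: submx_trans (capmxSl _ _) sV'G'].
Qed.

Lemma cell_gen_inj X1 M1 X2 M2 :
  is_subspace X1 -> is_subspace X2 -> \rank X1 = d -> \rank X2 = d ->
  (V' + cell_gen X1 M1 == V' + cell_gen X2 M2)%MS -> X1 = X2 /\ M1 = M2.
Proof.
move=> /eqP gX1 /eqP gX2 rX1 rX2 /eqmxP e12.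
have V'PC p (D : 'M_(p, n)) : D *m V' *m PC = 0.
  by rewrite PC_G' // (submx_trans (submxMl _ _)).
have V'PB p (D : 'M_(p, n)) : D *m V' *m PB = 0.
  by rewrite PB_V'C // (submx_trans (submxMl _ _)) ?addsmxSl.
have [u eu] : exists u : 'M_(d, n) * 'M_d,
    cell_gen X1 M1 = u.1 *m V' + u.2 *m cell_gen X2 M2.
  by apply/sub_addsmxP; rewrite -e12 addsmxSr.
have [u' eu'] : exists u : 'M_(d, n) * 'M_d,
    cell_gen X2 M2 = u.1 *m V' + u.2 *m cell_gen X1 M1.
  by apply/sub_addsmxP; rewrite e12 addsmxSr.
have b12 : rbase d X1 = u.2 *m rbase d X2.
  by rewrite -(cell_gen_PC X1 M1) eu mulmxDl V'PC add0r -mulmxA cell_gen_PC.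
have b21 : rbase d X2 = u'.2 *m rbase d X1.
  by rewrite -(cell_gen_PC X2 M2) eu' mulmxDl V'PC add0r -mulmxA cell_gen_PC.
have eX : X1 = X2.
  rewrite -gX1 -gX2; apply/genmxP/eqmxP.
  apply: eqmx_trans (eqmx_sym (eq_rbase rX1)) (eqmx_trans _ (eq_rbase rX2)).
  by apply/eqmxP/andP; split; [rewrite b12 | rewrite b21]; apply: submxMl.
split=> //; subst X2.
have u1 : u.2 = 1%:M by apply: (row_free_inj (rbase_free rX1)); rewrite mul1mx -b12.
have m12 : vec_mx M1 = u.2 *m vec_mx M2.
  by rewrite -(cell_gen_PB X1 M1) eu mulmxDl V'PB add0r -mulmxA cell_gen_PB.
by rewrite -[M1]vec_mxK m12 u1 mul1mx vec_mxK.
Qed.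

Lemma cell_gen_surj V : schubert_cell V' G' G (c + d) V ->
  exists X M, [/\ is_subspace X, \rank X = d & <<(V' + cell_gen X M)%MS>>%MS = V].
Proof.
case=> /eqP gV [sVG /eqmxP VG' rV].
have sV'V : (V' <= V)%MS by rewrite -VG' capmxSl.
have rVV' : (\rank V - \rank V')%N = d by rewrite rV rV' addKn.
have [Y [freeY YV'0 /eqmxP YV']] := exists_compl sV'V rVV'.
have sYV : (Y <= V)%MS by rewrite -YV' addsmxSl.
(* Y spans V modulo V'; its C-coordinates u.1 span the Grassmannian component X. *)
have [u eu] : exists u : 'M_(d, g) * 'M_(d, n), Y = u.1 *m C + u.2 *m G'.
  by apply/sub_addsmxP; rewrite (eqmxP CG') (submx_trans sYV).
have [v ev] : exists v : 'M_(d, a - c) * 'M_(d, n), u.2 *m G' = v.1 *m B + v.2 *m V'.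
  by apply/sub_addsmxP; rewrite (eqmxP BV') submxMl.
have freeR : row_free u.1.
  apply: inj_row_free => w wR0; apply: (row_free_inj freeY); rewrite mul0mx.
  apply: sub_cap0_eq0 (submxMl _ _) _ YV'0.
  rewrite -VG' sub_capmx (submx_trans (submxMl _ _)) //=.
  by rewrite eu mulmxDr mulmxA wR0 mul0mx add0r mulmxA submxMl.
have rX : \rank <<u.1>>%MS = d by rewrite mxrank_gen; apply/eqP.
have [T eT] : exists T : 'M_d, rbase d <<u.1>>%MS = T *m u.1.
  by apply/submxP; rewrite (eq_rbase rX) genmxE.
exists <<u.1>>%MS, (mxvec (T *m v.1)); split=> //; first by rewrite /is_subspace genmx_id.
have eW : cell_gen <<u.1>>%MS (mxvec (T *m v.1)) = T *m Y - T *m v.2 *m V'.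
  by rewrite /cell_gen mxvecK eT eu ev !mulmxDr !mulmxA addrA addrK.
have sWV : (V' + cell_gen <<u.1>>%MS (mxvec (T *m v.1)) <= V)%MS.
  rewrite addsmx_sub sV'V eW addmx_sub ?(submx_trans (submxMl _ _)) //.
  by rewrite eqmx_opp (submx_trans (submxMl _ _)).
have [_ [_ _]] := cell_gen_cell (mxvec (T *m v.1)) rX; rewrite mxrank_gen => rW.
rewrite -gV; apply/genmxP.
by rewrite -(mxrank_leqif_eq sWV).2 rW rV.
Qed.

Definition cell_param (p : Gr F d g * 'rV[F]_(d * (a - c))) :
  {V | schubert_cell V' G' G (c + d) V} := exist _ _ (cell_gen_cell p.2 (Gr_rank p.1)).

Lemma bijective_cell_param : bijective cell_param.
Proof.
apply: inj_surj_bijective.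
  case=> X1 M1 [X2 M2] /(congr1 sval) /= /genmxP e12.
  have [eX ->] :=
    cell_gen_inj (Gr_subspace X1) (Gr_subspace X2) (Gr_rank X1) (Gr_rank X2) e12.
  by rewrite (val_inj eX).
case=> V cellV; have [X [M [gX rX eV]]] := cell_gen_surj cellV.
have XGr : is_subspace X && (\rank X == d) by rewrite gX rX eqxx.
by exists (exist _ X XGr, M); apply: subset_eq_compat.
Qed.

End SchubertCell.

Lemma equipotent_cell (F : fieldType) n (V' G' G : 'M[F]_n) (c a g d : nat) :
  (V' <= G')%MS -> (G' <= G)%MS -> \rank V' = c -> \rank G' = a -> \rank G = (a + g)%N ->
  equipotent (Gr F d g * 'rV[F]_(d * (a - c))) {V | schubert_cell V' G' G (c + d) V}.
Proof.
move=> sV'G' sG'G rV' rG' rG.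
have [C [freeC CG'0 CG']] := exists_compl sG'G (etrans (congr2 subn rG rG') (addKn a g)).
have [B [freeB BV'0 BV']] := exists_compl sV'G' (congr2 subn rG' rV').
have [PC PC_coord] := exists_coord freeC CG'0.
have sBG' : (B <= G')%MS by rewrite -(eqmxP BV') addsmxSl.
have [PB PB_coord] := exists_coord freeB (capmx_adds_disjoint sBG' sV'G' CG'0 BV'0).
by eexists; apply: bijective_cell_param; eassumption.
Qed.

(** * The flag ker N^i + im N *)

Lemma mxrank_modular (F : fieldType) n (V K N : 'M[F]_n) : (N <= V)%MS ->
  (\rank (V :&: (K + N)) + \rank (K :&: N) = \rank (V :&: K) + \rank N)%N.
Proof.
move=> sNV.
have e1 : (V :&: (K + N) :=: N + K :&: V)%MS.
  by rewrite capmxC addsmxC; apply: eqmx_sym; apply: matrix_modl.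
have e2 : (N :&: (K :&: V) :=: K :&: N)%MS.
  rewrite capmxA [(K :&: N)%MS]capmxC; apply/capmx_idPl.
  exact: submx_trans (capmxSl _ _) sNV.
by rewrite e1 -e2 mxrank_sum_cap addnC capmxC.
Qed.

Section KernelFlag.

Variables (F : fieldType) (n : nat) (N : 'M[F]_n).

Lemma kermx_expS i j : (i <= j)%N -> (kermx (N ^+ i) <= kermx (N ^+ j))%MS.
Proof.
move=> hij; apply/sub_kermxP; rewrite -(subnKC hij) exprD mulmxA.
by rewrite mulmx_ker mul0mx.
Qed.

Lemma ker_cap_im i : (kermx (N ^+ i) :&: N :=: kermx (N ^+ i.+1) *m N)%MS.
Proof.
apply/eqmxP/andP; split.
  have /submxP [D eD] : (kermx (N ^+ i) :&: N <= N)%MS by apply: capmxSr.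
  rewrite eD submxMr //; apply/sub_kermxP.
  have : (kermx (N ^+ i) :&: N <= kermx (N ^+ i))%MS by apply: capmxSl.
  by rewrite eD => /sub_kermxP; rewrite exprS mulmxA.
rewrite sub_capmx submxMl andbT; apply/sub_kermxP.
by rewrite -mulmxA (_ : N *m N ^+ i = N ^+ i.+1) ?mulmx_ker // exprS.
Qed.

Lemma rank_ker_cap_im i :
  (\rank (kermx (N ^+ i) :&: N) + \rank (kermx N) = \rank (kermx (N ^+ i.+1)))%N.
Proof.
rewrite (ker_cap_im i) -(mxrank_mul_ker (kermx (N ^+ i.+1)) N); congr addn.
by have /capmx_idPr -> : (kermx N <= kermx (N ^+ i.+1))%MS by apply: (@kermx_expS 1).
Qed.

Definition kflag i : 'M[F]_n := (kermx (N ^+ i) + N)%MS.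

Lemma kflagS i j : (j <= i)%N -> (kflag j <= kflag i)%MS.
Proof. by move=> hji; rewrite addsmxS // kermx_expS. Qed.

Lemma im_sub_kflag i : (N <= kflag i)%MS.
Proof. exact: addsmxSr. Qed.

End KernelFlag.

Section FlagRanks.

Variables (F : fieldType) (n : nat) (N : 'M[F]_n) (lam mu : nat -> nat).

(* The rank of V :&: kflag N j forced by JF(N) = lam and JF(N|_V) = mu. *)
Definition flag_rank j := (n - lam 0 + \sum_(k < j) (mu k - lam k.+1))%N.

Definition flag_corank j := (\sum_(k < j) (lam k - mu k))%N.

Definition flag_ranks i (V : 'M[F]_n) : Prop :=
  is_subspace V /\ [/\ (V <= kflag N i)%MS, (N <= V)%MS &
    forall j, (j <= i)%N -> \rank (V :&: kflag N j) = flag_rank j].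

Definition step_factor i : Type :=
  (Gr F (mu i - lam i.+1) (lam i - lam i.+1) *
   'rV[F]_((mu i - lam i.+1) * flag_corank i))%type.

Lemma flag_rankS i : flag_rank i.+1 = (flag_rank i + (mu i - lam i.+1))%N.
Proof. by rewrite /flag_rank big_ord_recr /= addnA. Qed.

Lemma rank_cap_kflag (V : 'M[F]_n) i j : (j <= i)%N ->
  \rank (V :&: kflag N i :&: kflag N j) = \rank (V :&: kflag N j).
Proof.
move=> hji; apply/eqmx_rank/eqmxP; rewrite -capmxA; apply: cap_eqmx => //.
by apply/capmx_idPr; apply: kflagS.
Qed.

Lemma flag_ranks_cap i V :
  flag_ranks i.+1 V -> flag_ranks i <<(V :&: kflag N i)%MS>>%MS.
Proof.
case=> _ [_ sNV rV]; split; first by rewrite /is_subspace genmx_id.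
split; first by rewrite genmxE capmxSr.
  by rewrite genmxE sub_capmx sNV im_sub_kflag.
move=> j hji; rewrite -(rV j (leqW hji)) -(rank_cap_kflag V hji).
by apply/eqmx_rank/eqmxP; apply: cap_eqmx (genmxE _) (eqmx_refl _).
Qed.

Lemma flag_ranks_fibre i Y V : flag_ranks i Y ->
  (flag_ranks i.+1 V /\ <<(V :&: kflag N i)%MS>>%MS = Y) <->
  schubert_cell Y (kflag N i) (kflag N i.+1) (flag_rank i + (mu i - lam i.+1)) V.
Proof.
case=> /eqP gY [_ sNY rY]; split.
  case=> -[sV [sVG sNV rV]] eY; split=> //; split=> //.
    by rewrite -eY; apply/eqmxP/eqmx_sym/genmxE.
  rewrite -flag_rankS -(rV i.+1 (leqnn _)); apply/eqmx_rank/eqmxP/eqmx_sym.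
  exact/capmx_idPl.
case=> sV [sVG eY rV].
have sYV : (Y <= V)%MS by rewrite -(eqmxP eY) capmxSl.
split; last by rewrite -gY; apply/genmxP.
split=> //; split=> //; first exact: submx_trans sNY sYV.
move=> j; rewrite leq_eqVlt ltnS => /orP [/eqP -> | hji].
  by rewrite flag_rankS -rV; apply/eqmx_rank/eqmxP; apply/capmx_idPl.
rewrite -(rY j hji) -(rank_cap_kflag V hji).
by apply/eqmx_rank/eqmxP; apply: cap_eqmx (eqmx_refl _); apply/eqmxP.
Qed.

Lemma flag_ranks_rank i V : flag_ranks i V -> \rank V = flag_rank i.
Proof.
case=> _ [sVG _ rV]; rewrite -(rV i (leqnn i)).
by apply/eqmx_rank/eqmxP/eqmx_sym/capmx_idPl.
Qed.

Lemma equipotent_flag_ranksS i :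
  \rank (kflag N i) = (flag_rank i + flag_corank i)%N ->
  \rank (kflag N i.+1) = (flag_rank i + flag_corank i + (lam i - lam i.+1))%N ->
  equipotent {V | flag_ranks i.+1 V} ({V | flag_ranks i V} * step_factor i).
Proof.
move=> rGi rGi1.
pose cap_i (V : 'M[F]_n) := <<(V :&: kflag N i)%MS>>%MS.
apply: equipotent_trans (equipotent_fibres (g := cap_i) (@flag_ranks_cap i)) _.
apply: equipotent_sigma => -[Y fY] /=.
apply: equipotent_trans (equipotent_sig_iff (fun V => flag_ranks_fibre V fY)) _.
apply: equipotent_sym; rewrite /step_factor -[flag_corank i](addKn (flag_rank i)).
have [_ [sYG _ _]] := fY.
exact: equipotent_cell sYG (kflagS N (leqnSn i)) (flag_ranks_rank fY) rGi rGi1.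
Qed.

End FlagRanks.

Lemma sum_ord_recr (f : nat -> nat) j :
  (\sum_(k < j.+1) f k = \sum_(k < j) f k + f j)%N.
Proof. exact: big_ord_recr. Qed.

Lemma sum_ord_shift (f : nat -> nat) j :
  (\sum_(k < j) f k + f j = f 0 + \sum_(k < j) f k.+1)%N.
Proof. by rewrite -(big_ord_recr j f) big_ord_recl. Qed.

Lemma sum_ord_eq0 (f : nat -> nat) n i : (forall k, (n <= k)%N -> f k = 0%N) ->
  (n <= i)%N -> (\sum_(k < i) f k = \sum_(k < n) f k)%N.
Proof.
move=> f0 /subnKC <-; elim: (i - n)%N => [|t IH]; first by rewrite addn0.
by rewrite addnS big_ord_recr /= IH f0 ?leq_addr ?addn0.
Qed.

Section JordanType.

Variables (F : fieldType) (n : nat) (N : 'M[F]_n) (lam mu : nat -> nat).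
Hypotheses (lam_dec : forall i, (lam i.+1 <= lam i)%N).
Hypotheses (strip : forall i, (lam i.+1 <= mu i <= lam i)%N) (JF_N : JF N lam).

Let lam_le i j : (i <= j)%N -> (lam j <= lam i)%N.
Proof.
by apply: (homo_leq (r := fun x y => y <= x)%N) => // y x z /[swap]; apply: leq_trans.
Qed.

Lemma rank_kermx : \rank (kermx N) = lam 0.
Proof. by have := JF_N 1; rewrite big_ord1 expr1. Qed.

Lemma lam0_le : (lam 0 <= n)%N.
Proof. by rewrite -rank_kermx rank_leq_col. Qed.

Lemma rank_im : \rank N = (n - lam 0)%N.
Proof. by rewrite -rank_kermx mxrank_ker subKn ?rank_leq_row. Qed.

Lemma lam_eq0 k : (n <= k)%N -> lam k = 0%N.
Proof.
move=> le_nk; apply/eqP; rewrite -leqn0 (leq_trans (lam_le le_nk)) // leqNgt.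
apply/negP => lam_n_gt0.
have : (n.+1 <= \sum_(k < n.+1) lam k)%N.
  rewrite -[X in (X <= _)%N]card_ord -sum1_card leq_sum // => i _.
  by apply: leq_trans lam_n_gt0 (lam_le _); rewrite -ltnS.
by rewrite JF_N ltnNge rank_leq_col.
Qed.

Lemma mu_eq0 k : (n <= k)%N -> mu k = 0%N.
Proof. by move=> le_nk; have := lam_eq0 le_nk; have := strip k; lia. Qed.

Lemma rank_kermx_cap_im j : \rank (kermx (N ^+ j) :&: N) = (\sum_(k < j) lam k.+1)%N.
Proof.
have := rank_ker_cap_im N j; rewrite rank_kermx -!JF_N big_ord_recl.
by move/eqP; rewrite addnC eqn_add2l => /eqP.
Qed.

Lemma rank_kflag j : \rank (kflag N j) = (n - lam j)%N.
Proof.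
have := mxrank_sum_cap (kermx (N ^+ j)) N; rewrite rank_kermx_cap_im -JF_N rank_im.
have := sum_ord_shift lam j; have := lam_le (leq0n j); have := lam0_le; rewrite /kflag; lia.
Qed.

Lemma flag_rank_add_corank j :
  (flag_rank n lam mu j + flag_corank lam mu j)%N = (n - lam j)%N.
Proof.
elim: j => [|j IH]; first by rewrite /flag_rank /flag_corank !big_ord0; lia.
rewrite flag_rankS /flag_corank (sum_ord_recr (fun k => lam k - mu k)%N).
rewrite /flag_corank in IH.
have := strip j; have := lam_le (leq0n j); have := lam0_le; lia.
Qed.

Lemma rank_cap_kflagE (V : 'M[F]_n) j : (N <= V)%MS ->
  \rank (V :&: kflag N j) = flag_rank n lam mu j <->
  \rank (V :&: kermx (N ^+ j)) = (\sum_(k < j) mu k)%N.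
Proof.
move=> sNV; have := mxrank_modular (kermx (N ^+ j)) sNV.
rewrite rank_kermx_cap_im rank_im -/(kflag N j).
suff : (flag_rank n lam mu j + \sum_(k < j) lam k.+1 = \sum_(k < j) mu k + (n - lam 0))%N.
  by lia.
elim: j => [|j IH]; first by rewrite /flag_rank !big_ord0; lia.
rewrite flag_rankS (sum_ord_recr mu) (sum_ord_recr (fun k => lam k.+1)).
by have := strip j; lia.
Qed.

Lemma kermx_exp_stable i : (n <= i)%N -> (kermx (N ^+ i) :=: kermx (N ^+ n))%MS.
Proof.
move=> le_ni; apply/eqmx_sym/eqmxP.
by rewrite -(mxrank_leqif_eq (kermx_expS N le_ni)).2 -!JF_N (sum_ord_eq0 lam_eq0 le_ni).
Qed.

Lemma flag_ranks0_im : flag_ranks N lam mu 0 <<N>>%MS.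
Proof.
split; first by rewrite /is_subspace genmx_id.
split; [by rewrite genmxE im_sub_kflag | by rewrite genmxE |].
move=> j; rewrite leqn0 => /eqP ->; rewrite /flag_rank big_ord0 addn0 -rank_im.
apply/eqmx_rank/eqmxP; apply: eqmx_trans (genmxE _).
by apply/capmx_idPl; rewrite genmxE im_sub_kflag.
Qed.

Lemma flag_ranks0_eq V : flag_ranks N lam mu 0 V -> V = <<N>>%MS.
Proof.
move=> fV; have [/eqP gV [_ sNV _]] := fV; rewrite -gV; apply/genmxP/eqmxP/eqmx_sym/eqmxP.
by rewrite -(mxrank_leqif_eq sNV).2 (flag_ranks_rank fV) /flag_rank big_ord0 addn0 rank_im.
Qed.

Lemma equipotent_flag_ranks i :
  equipotent {V | flag_ranks N lam mu i V} (forall j : 'I_i, step_factor F lam mu j).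
Proof.
elim: i => [|i IH].
  apply/equipotent_sym/(@equipotent_pi_ord0 _ _ (exist _ _ flag_ranks0_im)) => -[V fV].
  by apply: subset_eq_compat; apply: flag_ranks0_eq.
have rGi : \rank (kflag N i) = (flag_rank n lam mu i + flag_corank lam mu i)%N.
  by rewrite rank_kflag flag_rank_add_corank.
have rGi1 : \rank (kflag N i.+1) =
    (flag_rank n lam mu i + flag_corank lam mu i + (lam i - lam i.+1))%N.
  rewrite rank_kflag flag_rank_add_corank.
  by have := lam_dec i; have := lam_le (leq0n i); have := lam0_le; lia.
apply: equipotent_trans (equipotent_flag_ranksS rGi rGi1) _.
apply: equipotent_trans _ (equipotent_sym (equipotent_pi_last i (step_factor F lam mu))).
exact: equipotent_prod IH (equipotent_refl _).
Qed.

Lemma flag_ranks_nE V : flag_ranks N lam mu n V <->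
  is_subspace V /\ (N <= V)%MS /\ JF_restr N V mu.
Proof.
split.
  case=> sV [_ sNV rV]; split=> //; split=> // i.
  have [le_in | lt_ni] := leqP i n; first by apply/esym/(rank_cap_kflagE _ sNV)/rV.
  rewrite (sum_ord_eq0 mu_eq0 (ltnW lt_ni)).
  rewrite (cap_eqmx (eqmx_refl V) (kermx_exp_stable (ltnW lt_ni))).
  exact/esym/(rank_cap_kflagE _ sNV)/rV.
case=> sV [sNV JF_V]; split=> //; split=> //.
  by apply: submx_full; rewrite /row_full rank_kflag lam_eq0 ?subn0.
by move=> j _; apply/(rank_cap_kflagE _ sNV).
Qed.

End JordanType.

Lemma equipotent_step_factors (F : fieldType) n (lam mu : nat -> nat) :
  equipotent (forall j : 'I_n, step_factor F lam mu j) (ProdSet F n lam mu).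
Proof.
apply: equipotent_trans (equipotent_pi_prod _ _) _.
apply: equipotent_trans (equipotent_prodC _ _) _.
apply: equipotent_prod; last exact: equipotent_refl.
exact: (equipotent_rV_triangle F n (fun k => lam k - mu k)%N (fun i => mu i - lam i.+1)%N).
Qed.

Theorem lemma5p7 (F : fieldType) (n : nat) (lam mu : nat -> nat) (N : 'M[F]_n)
  (hlam : is_partition lam) (hmu : is_partition mu)
  (hstrip : forall i : nat, (lam i.+1 <= mu i <= lam i)%N)
  (hnil : exists k : nat, N ^+ k = 0)
  (hJF : JF N lam) :
  exists f : SubspSet N mu -> ProdSet F n lam mu, bijective f.
Proof.
(* hmu and hnil follow from the other hypotheses. *)
have [lam_dec _] := hlam.
apply: equipotent_trans _ (equipotent_step_factors F n lam mu).
apply: equipotent_trans _ (equipotent_flag_ranks lam_dec hstrip hJF n).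
exact/equipotent_sym/equipotent_sig_iff/(flag_ranks_nE lam_dec hstrip hJF).
Qed.
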